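(* Let $k\ge2$, $-\frac{\pi}{2}\le\theta_1<\dots<\theta_k\le\frac{\pi}{2}$, $\hat\theta_1,\dots,\hat\theta_k\in[-\frac{\pi}{2},\frac{\pi}{2}]$, and $\epsilon>0$. If $$\|\eta_{k,k}(e^{i\theta_1},\dots,e^{i\theta_k},e^{i\hat\theta_1},\dots,e^{i\hat\theta_k})\|_\infty<\Big(\frac{2}{\pi}\Big)^k\epsilon\quad\text{and}\quad\theta_{\min}=\min_{q\ne j}|\theta_q-\theta_j|\ge\Big(\frac{4\epsilon}{\lambda(k)}\Big)^{1/k},$$ then after reordering the $\hat\theta_j$, for all $j=1,\dots,k$, $$|\hat\theta_j-\theta_j|<\frac{\theta_{\min}}{2}\quad\text{and}\quad|\hat\theta_j-\theta_j|\le\frac{2^{k-1}\epsilon}{(k-2)!\,\theta_{\min}^{k-1}}.$$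
   Context: For $z_1,\dots,z_p,\hat z_1,\dots,\hat z_q\in\mathbb C$, $\eta_{p,q}(z_1,\dots,z_p,\hat z_1,\dots,\hat z_q)\in\mathbb R^p$ is the vector whose $j$-th entry is $\prod_{l=1}^q|z_j-\hat z_l|$. For an integer $k\ge1$: $\xi(1)=\frac12$; $\xi(k)=\frac{(\frac{k-1}{2})!(\frac{k-3}{2})!}{4}$ if $k\ge3$ is odd; $\xi(k)=\frac{((\frac{k-2}{2})!)^2}{4}$ if $k$ is even. For $k\ge2$: $\lambda(2)=1$ and $\lambda(k)=\xi(k-2)$ for $k\ge3$. *)

From Stdlib Require Import Reals Lra Lia Arith List.
Open Scope R_scope.

(* Modulus of a complex number a + i b. *)
Definition cmod (a b : R) : R := sqrt (a ^ 2 + b ^ 2).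

(* |e^{i t} - e^{i s}| *)
Definition unit_dist (t s : R) : R := cmod (cos t - cos s) (sin t - sin s).

(* Product over l = 0..q-1 of |z_j - zh_l|, where z and zh are given by their
   real and imaginary parts (indices start at 0). *)
Fixpoint prod_dist (zre zim : R) (zhre zhim : nat -> R) (q : nat) : R :=
  match q with
  | O => 1
  | S q' => prod_dist zre zim zhre zhim q' * cmod (zre - zhre q') (zim - zhim q')
  end.

(* j-th entry (0-based) of eta_{p,q}(z_1..z_p, zh_1..zh_q). *)
Definition eta_entry (q : nat) (zre zim zhre zhim : nat -> R) (j : nat) : R :=
  prod_dist (zre j) (zim j) zhre zhim q.

Fixpoint norm_inf (p : nat) (v : nat -> R) : R :=
  match p with
  | O => 0
  | S p' => Rmax (norm_inf p' v) (Rabs (v p'))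
  end.

(* ||eta_{p,q}(e^{i th_1},...,e^{i th_p}, e^{i thh_1},...,e^{i thh_q})||_inf *)
Definition eta_unit_norm (p q : nat) (th thh : nat -> R) : R :=
  norm_inf p (eta_entry q (fun j => cos (th j)) (fun j => sin (th j))
                          (fun l => cos (thh l)) (fun l => sin (thh l))).

(* xi(k) as in the paper (k >= 1; value at 0 irrelevant). *)
Definition xi (k : nat) : R :=
  match k with
  | O => 0
  | 1%nat => / 2
  | _ => if Nat.odd k
         then INR (fact ((k - 1) / 2)) * INR (fact ((k - 3) / 2)) / 4
         else (INR (fact ((k - 2) / 2))) ^ 2 / 4
  end.

Definition lambda (k : nat) : R :=
  match k with
  | 2%nat => 1
  | _ => xi (k - 2)
  end.

Definition is_theta_min (k : nat) (th : nat -> R) (m : R) : Prop :=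
  (forall q j, (q < k)%nat -> (j < k)%nat -> q <> j -> m <= Rabs (th q - th j)) /\
  (exists q j, (q < k)%nat /\ (j < k)%nat /\ q <> j /\ m = Rabs (th q - th j)).

(* Jordan's inequality turns the hypothesis on [eta] into [prod_l |th_j - thh_l| < eps] for
   every [j].  Let [p] and [q] be the monic polynomials with roots [thh] and [th].  Partial
   fractions give [p x / q x = 1 - sum_i p (th_i) / (q' (th_i) (th_i - x))]; at distance
   [tmin / 2] from every [th_i], the bound [|q' (th_i)| >= i! (k-1-i)! tmin^(k-1)] and the
   threshold on [tmin] make the sum smaller than [1], so [p / q > 0] there.  As [q] changes sign
   between [th_j - tmin / 2] and [th_j + tmin / 2], so does [p]: some [thh_l] lies within
   [tmin / 2] of [th_j], and these intervals are disjoint, which gives the matching.  In the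
   product at [th_j] every factor but the matched one is at least [(2 |i - j| - 1) tmin / 2],
   which gives the error bound. *)

From Stdlib Require Import Reals Arith Lra Lia List Permutation ClassicalEpsilon.
Open Scope R_scope.

Fixpoint rprod (n : nat) (f : nat -> R) : R :=
  match n with O => 1 | S n => rprod n f * f n end.

Fixpoint rsum (n : nat) (f : nat -> R) : R :=
  match n with O => 0 | S n => rsum n f + f n end.

Lemma rprod_ext n f g : (forall i, (i < n)%nat -> f i = g i) -> rprod n f = rprod n g.
Proof.
  induction n as [|n IH]; intros Hfg; simpl; [reflexivity|].
  rewrite IH by (intros; apply Hfg; lia). rewrite Hfg by lia. reflexivity.
Qed.

Lemma rsum_ext n f g : (forall i, (i < n)%nat -> f i = g i) -> rsum n f = rsum n g.
Proof.
  induction n as [|n IH]; intros Hfg; simpl; [reflexivity|].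
  rewrite IH by (intros; apply Hfg; lia). rewrite Hfg by lia. reflexivity.
Qed.

Lemma rprod_shift n f : rprod (S n) f = f 0%nat * rprod n (fun t => f (S t)).
Proof. induction n as [|n IH]; simpl in *; [ring|]. rewrite IH. ring. Qed.

Lemma rsum_shift n f : rsum (S n) f = f 0%nat + rsum n (fun t => f (S t)).
Proof. induction n as [|n IH]; simpl in *; [ring|]. rewrite IH. ring. Qed.

Lemma rprod_mult n f g : rprod n (fun i => f i * g i) = rprod n f * rprod n g.
Proof. induction n as [|n IH]; simpl; [ring|]. rewrite IH. ring. Qed.

Lemma rprod_scal n c f : rprod n (fun i => c * f i) = c ^ n * rprod n f.
Proof. induction n as [|n IH]; simpl; [ring|]. rewrite IH. ring. Qed.

Lemma rprod_abs n f : Rabs (rprod n f) = rprod n (fun i => Rabs (f i)).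
Proof. induction n as [|n IH]; simpl; [apply Rabs_R1|]. rewrite Rabs_mult, IH. reflexivity. Qed.

Lemma rsum_add n f g : rsum n (fun i => f i + g i) = rsum n f + rsum n g.
Proof. induction n as [|n IH]; simpl; [ring|]. rewrite IH. ring. Qed.

Lemma rsum_scal n c f : rsum n (fun i => c * f i) = c * rsum n f.
Proof. induction n as [|n IH]; simpl; [ring|]. rewrite IH. ring. Qed.

Lemma rsum_abs n f : Rabs (rsum n f) <= rsum n (fun i => Rabs (f i)).
Proof.
  induction n as [|n IH]; simpl; [rewrite Rabs_R0; lra|].
  eapply Rle_trans; [apply Rabs_triang | lra].
Qed.

Lemma rsum_le n f g : (forall i, (i < n)%nat -> f i <= g i) -> rsum n f <= rsum n g.
Proof.
  induction n as [|n IH]; intros Hfg; simpl; [lra|].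
  assert (rsum n f <= rsum n g) by (apply IH; intros; apply Hfg; lia).
  assert (f n <= g n) by (apply Hfg; lia). lra.
Qed.

Lemma rsum_lt n f g :
  (0 < n)%nat -> (forall i, (i < n)%nat -> f i < g i) -> rsum n f < rsum n g.
Proof.
  intros Hn Hfg. destruct n as [|n]; [lia|]. simpl.
  assert (rsum n f <= rsum n g) by (apply rsum_le; intros; left; apply Hfg; lia).
  assert (f n < g n) by (apply Hfg; lia). lra.
Qed.

Lemma rprod_nonneg n f : (forall i, (i < n)%nat -> 0 <= f i) -> 0 <= rprod n f.
Proof.
  induction n as [|n IH]; intros Hf; simpl; [lra|].
  apply Rmult_le_pos; [apply IH; intros|]; apply Hf; lia.
Qed.

Lemma rprod_pos n f : (forall i, (i < n)%nat -> 0 < f i) -> 0 < rprod n f.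
Proof.
  induction n as [|n IH]; intros Hf; simpl; [lra|].
  apply Rmult_lt_0_compat; [apply IH; intros|]; apply Hf; lia.
Qed.

Lemma rprod_neq0 n f : (forall i, (i < n)%nat -> f i <> 0) -> rprod n f <> 0.
Proof.
  induction n as [|n IH]; intros Hf; simpl; [lra|].
  apply Rmult_integral_contrapositive_currified; [apply IH; intros|]; apply Hf; lia.
Qed.

Lemma rprod_le n f g : (forall i, (i < n)%nat -> 0 <= f i <= g i) -> rprod n f <= rprod n g.
Proof.
  induction n as [|n IH]; intros Hfg; simpl; [lra|].
  apply Rmult_le_compat.
  - apply rprod_nonneg; intros; apply Hfg; lia.
  - apply Hfg; lia.
  - apply IH; intros; apply Hfg; lia.
  - apply Hfg; lia.
Qed.

Lemma rprod_neg_of_neg n f j :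
  (j < n)%nat -> f j < 0 -> (forall i, (i < n)%nat -> i <> j -> 0 < f i) -> rprod n f < 0.
Proof.
  induction n as [|n IH]; intros Hj Hfj Hf; simpl; [lia|].
  destruct (Nat.eq_dec j n) as [->|Hjn].
  - assert (0 < rprod n f) by (apply rprod_pos; intros; apply Hf; lia). nra.
  - assert (rprod n f < 0) by (apply IH; [lia | exact Hfj | intros; apply Hf; lia]).
    assert (0 < f n) by (apply Hf; lia). nra.
Qed.

Lemma rprod_neg_exists n f : rprod n f < 0 -> exists i, (i < n)%nat /\ f i < 0.
Proof.
  intros Hneg. apply Classical_Prop.NNPP. intros Hnone.
  enough (0 <= rprod n f) by lra.
  apply rprod_nonneg. intros i Hi. apply Rnot_lt_le. intros Hfi. apply Hnone. eauto.
Qed.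

Fixpoint lprod (f : nat -> R) (l : list nat) : R :=
  match l with nil => 1 | x :: l => f x * lprod f l end.

Lemma lprod_app f l1 l2 : lprod f (l1 ++ l2) = lprod f l1 * lprod f l2.
Proof. induction l1 as [|a l1 IH]; simpl; [ring|]. rewrite IH. ring. Qed.

Lemma rprod_lprod f n : rprod n f = lprod f (seq 0 n).
Proof.
  induction n as [|n IH]; [reflexivity|].
  rewrite seq_S, lprod_app, <- IH. simpl. ring.
Qed.

Lemma lprod_perm f l1 l2 : Permutation l1 l2 -> lprod f l1 = lprod f l2.
Proof.
  induction 1 as [| x l l' _ IH | x y l | l l' l'' _ IH1 _ IH2]; simpl;
    [reflexivity | rewrite IH; reflexivity | ring | congruence].
Qed.

Lemma rprod_perm k (sigma : nat -> nat) f :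
  (forall j, (j < k)%nat -> (sigma j < k)%nat) ->
  (forall i j, (i < k)%nat -> (j < k)%nat -> sigma i = sigma j -> i = j) ->
  rprod k (fun i => f (sigma i)) = rprod k f.
Proof.
  intros Hrange Hinj. rewrite !rprod_lprod.
  assert (Hmap : lprod (fun i => f (sigma i)) (seq 0 k) = lprod f (map sigma (seq 0 k))).
  { induction (seq 0 k) as [|a l IH]; simpl; [reflexivity|]. rewrite IH. reflexivity. }
  rewrite Hmap. apply lprod_perm, Permutation_map_same_l.
  - apply FinFun.Injective_map_NoDup_in; [|apply seq_NoDup].
    intros x y Hx Hy. apply in_seq in Hx, Hy. apply Hinj; lia.
  - intros y Hy. apply in_map_iff in Hy. destruct Hy as [x [<- Hx]].
    apply in_seq in Hx. apply in_seq. specialize (Hrange x). lia.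
Qed.

Lemma rprod_punctured j k h : (j < k)%nat ->
  rprod k (fun i => if Nat.eqb i j then 1 else h i)
  = rprod j h * rprod (k - 1 - j) (fun t => h (j + 1 + t)%nat).
Proof.
  intros Hjk. replace k with (j + 1 + (k - 1 - j))%nat at 1 by lia.
  induction (k - 1 - j)%nat as [|n IH].
  - rewrite Nat.add_0_r, Nat.add_1_r. simpl. rewrite Nat.eqb_refl, Rmult_1_r, Rmult_1_r.
    apply rprod_ext. intros i Hi. destruct (Nat.eqb_spec i j); [lia | reflexivity].
  - rewrite Nat.add_succ_r. simpl. rewrite IH.
    destruct (Nat.eqb_spec (j + 1 + n) j); [lia | ring].
Qed.

Lemma rprod_pick j k f : (j < k)%nat ->
  rprod k f = f j * rprod k (fun i => if Nat.eqb i j then 1 else f i).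
Proof.
  intros Hjk. rewrite rprod_punctured by exact Hjk.
  replace k with (j + 1 + (k - 1 - j))%nat at 1 by lia.
  induction (k - 1 - j)%nat as [|n IH].
  - rewrite Nat.add_0_r, Nat.add_1_r. simpl. ring.
  - rewrite Nat.add_succ_r. simpl. rewrite IH. ring.
Qed.

Lemma rprod_rev j g : rprod j (fun m => g (j - m)%nat) = rprod j (fun t => g (S t)).
Proof.
  revert g. induction j as [|j IH]; intros g; [reflexivity|].
  rewrite (rprod_shift j (fun t => g (S t))). cbn [rprod].
  replace (S j - j)%nat with 1%nat by lia.
  rewrite (rprod_ext j _ (fun m => g (S (j - m)))) by (intros m Hm; f_equal; lia).
  rewrite (IH (fun n => g (S n))). ring.
Qed.

Lemma rprod_punctured_dist (g : R -> R) j k : (j < k)%nat ->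
  rprod k (fun m => if Nat.eqb m j then 1 else g (Rabs (INR j - INR m)))
  = rprod j (fun t => g (INR (S t))) * rprod (k - 1 - j) (fun t => g (INR (S t))).
Proof.
  intros Hjk. rewrite rprod_punctured by exact Hjk. f_equal.
  - rewrite (rprod_ext j _ (fun m => g (INR (j - m)))).
    + exact (rprod_rev j (fun n => g (INR n))).
    + intros m Hm. rewrite minus_INR by lia. rewrite Rabs_right; [reflexivity|].
      apply Rle_ge. pose proof (le_INR m j ltac:(lia)). lra.
  - apply rprod_ext. intros t _. f_equal.
    rewrite Rabs_minus_sym, !plus_INR, (S_INR t), Rabs_right; change (INR 1) with 1;
      [ring | pose proof (pos_INR t); lra].
Qed.

Lemma rprod_fact n : rprod n (fun t => INR (S t)) = INR (fact n).
Proof.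
  induction n as [|n IH]; [reflexivity|].
  cbn [rprod]. rewrite IH, fact_simpl, mult_INR. ring.
Qed.

Definition distinct (x : nat -> R) (n : nat) : Prop :=
  forall i j, (i < n)%nat -> (j < n)%nat -> i <> j -> x i <> x j.

Definition nodal (b : nat -> R) (r : nat) (y : R) : R := rprod r (fun l => y - b l).

Definition lagrange_den (x : nat -> R) (n i : nat) : R :=
  rprod n (fun m => if Nat.eqb m i then 1 else x i - x m).

Definition divdiff (f : R -> R) (x : nat -> R) (n : nat) : R :=
  rsum n (fun i => f (x i) / lagrange_den x n i).

Lemma lagrange_den_neq0 x n i : distinct x n -> (i < n)%nat -> lagrange_den x n i <> 0.
Proof.
  intros Hx Hi. apply rprod_neq0. intros m Hm.
  destruct (Nat.eqb_spec m i); [lra|]. apply Rminus_eq_contra, Hx; lia.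
Qed.

Lemma distinct_le x n m : (m <= n)%nat -> distinct x n -> distinct x m.
Proof. intros Hmn Hx i j Hi Hj. apply Hx; lia. Qed.

Lemma distinct_shift x n : distinct x (S n) -> distinct (fun i => x (S i)) n.
Proof. intros Hx i j Hi Hj Hij. apply Hx; lia. Qed.

Lemma divdiff_ext f g x n : (forall y, f y = g y) -> divdiff f x n = divdiff g x n.
Proof. intros Hfg. apply rsum_ext. intros i _. rewrite Hfg. reflexivity. Qed.

Lemma divdiff_add f g x n : divdiff (fun y => f y + g y) x n = divdiff f x n + divdiff g x n.
Proof. unfold divdiff. rewrite <- rsum_add. apply rsum_ext. intros i _. unfold Rdiv. ring. Qed.

Lemma divdiff_scal c f x n : divdiff (fun y => c * f y) x n = c * divdiff f x n.
Proof. unfold divdiff. rewrite <- rsum_scal. apply rsum_ext. intros i _. unfold Rdiv. ring. Qed.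

Lemma divdiff_mul_last h x n : distinct x (S n) ->
  divdiff (fun y => (y - x n) * h y) x (S n) = divdiff h x n.
Proof.
  intros Hx. unfold divdiff. cbn [rsum]. rewrite Rminus_diag, Rmult_0_l, Rdiv_0_l, Rplus_0_r.
  apply rsum_ext. intros i Hi. unfold lagrange_den. cbn [rprod].
  destruct (Nat.eqb_spec n i) as [|_]; [lia|].
  assert (x i - x n <> 0) by (apply Rminus_eq_contra, Hx; lia).
  pose proof (lagrange_den_neq0 x n i (distinct_le x (S n) n (Nat.le_succ_diag_r n) Hx) Hi).
  unfold lagrange_den in *. field. auto.
Qed.

Lemma divdiff_mul_first h x n : distinct x (S n) ->
  divdiff (fun y => (y - x 0%nat) * h y) x (S n) = divdiff h (fun i => x (S i)) n.
Proof.
  intros Hx. unfold divdiff. rewrite rsum_shift, Rminus_diag, Rmult_0_l, Rdiv_0_l, Rplus_0_l.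
  apply rsum_ext. intros i Hi. unfold lagrange_den. rewrite rprod_shift. cbn [Nat.eqb].
  assert (x (S i) - x 0%nat <> 0) by (apply Rminus_eq_contra, Hx; lia).
  pose proof (lagrange_den_neq0 _ n i (distinct_shift x n Hx) Hi).
  unfold lagrange_den in *. field. auto.
Qed.

Lemma divdiff_one x : divdiff (fun _ => 1) x 1 = 1.
Proof. unfold divdiff, lagrange_den. simpl. field. Qed.

Lemma divdiff_const_step x n : distinct x (S (S n)) ->
  (x (S n) - x 0%nat) * divdiff (fun _ => 1) x (S (S n))
  = divdiff (fun _ => 1) (fun i => x (S i)) (S n) - divdiff (fun _ => 1) x (S n).
Proof.
  intros Hx. rewrite <- divdiff_scal.
  rewrite (divdiff_ext _ (fun y => (y - x 0%nat) * 1 + (-1) * ((y - x (S n)) * 1)))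
    by (intros; ring).
  rewrite divdiff_add, divdiff_scal, divdiff_mul_first, divdiff_mul_last by exact Hx. ring.
Qed.

Lemma divdiff_const_zero n : forall x, distinct x (S (S n)) ->
  divdiff (fun _ => 1) x (S (S n)) = 0.
Proof.
  induction n as [|n IH]; intros x Hx.
  - apply (Rmult_eq_reg_l (x 1%nat - x 0%nat)); [| apply Rminus_eq_contra, Hx; lia].
    rewrite Rmult_0_r, divdiff_const_step, !divdiff_one by exact Hx. ring.
  - apply (Rmult_eq_reg_l (x (S (S n)) - x 0%nat)); [| apply Rminus_eq_contra, Hx; lia].
    rewrite Rmult_0_r, divdiff_const_step, !IH by
      (exact Hx || exact (distinct_shift x _ Hx)
       || exact (distinct_le x _ _ (Nat.le_succ_diag_r _) Hx)).
    ring.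
Qed.

Lemma divdiff_nodal b r : forall n x, (r < n)%nat -> distinct x n ->
  divdiff (nodal b r) x n = if Nat.eqb (S r) n then 1 else 0.
Proof.
  induction r as [|r IH]; intros n x Hrn Hx.
  - destruct n as [|[|n]]; [lia | apply divdiff_one | apply divdiff_const_zero; exact Hx].
  - destruct n as [|n]; [lia|].
    rewrite (divdiff_ext _ (fun y => (y - x n) * nodal b r y + (x n - b r) * nodal b r y))
      by (intros; unfold nodal; simpl; ring).
    rewrite divdiff_add, divdiff_scal, divdiff_mul_last by exact Hx.
    rewrite !IH by (lia || exact Hx || exact (distinct_le x _ _ (Nat.le_succ_diag_r _) Hx)).
    rewrite (proj2 (Nat.eqb_neq (S r) (S n))) by lia. simpl. ring.
Qed.

(* Read off from the divided difference of [nodal b k] over the nodes [a 0, ..., a (k - 1), xs]. *)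
Lemma nodal_ratio_partial_fractions a b k xs :
  distinct a k -> (forall i, (i < k)%nat -> xs <> a i) ->
  nodal b k xs / nodal a k xs
  = 1 - rsum k (fun i => nodal b k (a i) / (lagrange_den a k i * (a i - xs))).
Proof.
  intros Ha Hxs.
  set (x := fun m => if Nat.eqb m k then xs else a m).
  assert (Hx : distinct x (S k)).
  { intros i j Hi Hj Hij. unfold x.
    destruct (Nat.eqb_spec i k), (Nat.eqb_spec j k); subst;
      [lia | apply Hxs; lia | intros E; apply (Hxs i); [lia | auto] | apply Ha; lia]. }
  pose proof (divdiff_nodal b k (S k) x (Nat.lt_succ_diag_r k) Hx) as E.
  rewrite Nat.eqb_refl in E. unfold divdiff in E. cbn [rsum] in E.
  assert (Hden : forall i, (i < k)%nat -> lagrange_den x (S k) i = lagrange_den a k i * (a i - xs)).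
  { intros i Hi. unfold lagrange_den, x. cbn [rprod]. rewrite Nat.eqb_refl.
    destruct (Nat.eqb_spec i k), (Nat.eqb_spec k i); try lia. f_equal.
    apply rprod_ext. intros m Hm. destruct (Nat.eqb_spec m k); [lia | reflexivity]. }
  assert (Hlast : lagrange_den x (S k) k = nodal a k xs).
  { unfold lagrange_den, nodal, x. cbn [rprod]. rewrite Nat.eqb_refl, Rmult_1_r.
    apply rprod_ext. intros m Hm. destruct (Nat.eqb_spec m k); [lia | reflexivity]. }
  rewrite Hlast, (rsum_ext k _ (fun i => nodal b k (a i) / (lagrange_den a k i * (a i - xs)))) in E.
  - unfold x at 1 in E. rewrite Nat.eqb_refl in E. lra.
  - intros i Hi. rewrite Hden by exact Hi. unfold x.
    destruct (Nat.eqb_spec i k); [lia | reflexivity].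
Qed.

Definition odd_fact (n : nat) : R := rprod n (fun t => 2 * INR (S t) - 1).

Lemma odd_fact_mul_ge s : forall a b, (a + b)%nat = S s -> INR (fact s) <= odd_fact a * odd_fact b.
Proof.
  induction s as [|s IH]; intros a b Hab.
  - destruct a as [|[|a]], b as [|[|b]]; try lia; unfold odd_fact; simpl; lra.
  - assert (Hstep : forall a b, (a + b)%nat = S (S s) -> (b <= a)%nat ->
              INR (fact (S s)) <= odd_fact a * odd_fact b).
    { clear a b Hab. intros a b Hab Hba. destruct a as [|a]; [lia|].
      assert (INR (fact s) <= odd_fact a * odd_fact b) by (apply IH; lia).
      assert (INR (S s) <= 2 * INR (S a) - 1).
      { rewrite !S_INR. pose proof (le_INR s (2 * a) ltac:(lia)).
        rewrite mult_INR in *. simpl in *. lra. }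
      unfold odd_fact at 1. cbn [rprod]. fold (odd_fact a).
      rewrite fact_simpl, mult_INR.
      replace (odd_fact a * (2 * INR (S a) - 1) * odd_fact b)
        with ((2 * INR (S a) - 1) * (odd_fact a * odd_fact b)) by ring.
      apply Rmult_le_compat; auto using pos_INR. }
    destruct (Nat.le_gt_cases b a); [apply Hstep; auto | rewrite Rmult_comm; apply Hstep; lia].
Qed.

Lemma sum_f_R0_rsum f n : sum_f_R0 f n = rsum (S n) f.
Proof. induction n as [|n IH]; simpl; [ring | rewrite IH; reflexivity]. Qed.

Lemma rsum_inv_fact_mul n :
  rsum (S n) (fun i => / (INR (fact i) * INR (fact (n - i)))) = 2 ^ n / INR (fact n).
Proof.
  pose proof (binomial 1 1 n) as E. rewrite sum_f_R0_rsum in E.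
  replace (1 + 1) with 2 in E by ring. rewrite E. unfold Rdiv. rewrite Rmult_comm, <- rsum_scal.
  apply rsum_ext. intros i _. rewrite !pow1. unfold C.
  pose proof (INR_fact_neq_0 n). pose proof (INR_fact_neq_0 i). pose proof (INR_fact_neq_0 (n - i)).
  field. auto.
Qed.

Lemma fact_sq_pow4_le r : (fact r * fact r * 4 ^ r <= fact (2 * r + 1))%nat.
Proof.
  induction r as [|r IH]; [simpl; lia|].
  replace (2 * S r + 1)%nat with (S (S (2 * r + 1))) by lia.
  rewrite !fact_simpl, Nat.pow_succ_r'. nia.
Qed.

Lemma xi_even r : xi (2 * r + 2) = INR (fact r) ^ 2 / 4.
Proof.
  assert (Hodd : Nat.odd (2 * r + 2) = false)
    by (rewrite <- Nat.negb_even, Nat.even_add, Nat.even_mul; reflexivity).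
  replace (2 * r + 2)%nat with (S (S (2 * r))) in * by lia. unfold xi. rewrite Hodd.
  replace (S (S (2 * r)) - 2)%nat with (r * 2)%nat by lia. rewrite Nat.div_mul by lia.
  reflexivity.
Qed.

Lemma xi_odd r : xi (2 * r + 3) = INR (fact (S r)) * INR (fact r) / 4.
Proof.
  assert (Hodd : Nat.odd (2 * r + 3) = true)
    by (rewrite <- Nat.negb_even, Nat.even_add, Nat.even_mul; reflexivity).
  replace (2 * r + 3)%nat with (S (S (S (2 * r)))) in * by lia. unfold xi. rewrite Hodd.
  replace (S (S (S (2 * r))) - 1)%nat with (S r * 2)%nat by lia.
  replace (S (S (S (2 * r))) - 3)%nat with (r * 2)%nat by lia.
  rewrite !Nat.div_mul by lia. reflexivity.
Qed.

Lemma xi_pos_mul_pow2_le m : (1 <= m)%nat -> 0 < xi m /\ xi m * 2 ^ m <= INR (fact (S m)).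
Proof.
  intros Hm. destruct (Nat.Even_or_Odd m) as [[r Hr] | [r Hr]].
  - destruct r as [|r]; [lia|]. replace m with (2 * r + 2)%nat in * by lia. rewrite xi_even.
    pose proof (lt_0_INR _ (lt_O_fact r)). split; [nra|].
    replace (INR (fact r) ^ 2 / 4 * 2 ^ (2 * r + 2)) with (INR (fact r * fact r * 4 ^ r)).
    + apply le_INR. pose proof (fact_sq_pow4_le r).
      pose proof (fact_le (2 * r + 1) (S (2 * r + 2)) ltac:(lia)). lia.
    + rewrite !mult_INR, pow_INR, pow_add, pow_mult.
      replace (INR 4) with 4 by (simpl; lra). replace (2 ^ 2) with 4 by ring. field.
  - destruct r as [|r].
    + subst m. simpl. lra.
    + replace m with (2 * r + 3)%nat in * by lia. rewrite xi_odd.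
      pose proof (lt_0_INR _ (lt_O_fact r)). pose proof (lt_0_INR _ (lt_O_fact (S r))).
      split; [nra|].
      replace (INR (fact (S r)) * INR (fact r) / 4 * 2 ^ (2 * r + 3))
        with (INR (2 * fact (S r) * fact r * 4 ^ r)).
      * apply le_INR. pose proof (fact_sq_pow4_le (S r)).
        pose proof (fact_le (2 * S r + 1) (S (2 * r + 3)) ltac:(lia)).
        assert (fact r * 4 ^ r <= fact (S r) * 4 ^ r)%nat
          by (apply Nat.mul_le_mono_r, fact_le; lia).
        rewrite Nat.pow_succ_r' in *. nia.
      * rewrite !mult_INR, pow_INR, pow_add, pow_mult.
        replace (INR 4) with 4 by (simpl; lra). replace (INR 2) with 2 by reflexivity.
        replace (2 ^ 2) with 4 by ring. field.
Qed.

Lemma lambda_pos_bound k : (2 <= k)%nat ->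
  0 < lambda k /\ lambda k * 2 ^ (k - 2) <= INR (fact (k - 1)).
Proof.
  intros Hk. destruct k as [|[|[|k]]]; try lia.
  - simpl. lra.
  - unfold lambda. replace (S (S (S k)) - 2)%nat with (S k) by lia.
    replace (S (S (S k)) - 1)%nat with (S (S k)) by lia.
    apply xi_pos_mul_pow2_le. lia.
Qed.

(* [g t = sin t - 2 t / PI] vanishes at [0] and [PI / 2]; if [g u < 0], the mean value theorem
   on [[0, u]] and [[u, PI / 2]] gives [g' c1 < 0 < g' c2] with [c1 < c2], whereas
   [g' = cos - 2 / PI] is decreasing. *)
Lemma sin_ge_jordan u : 0 <= u <= PI / 2 -> 2 / PI * u <= sin u.
Proof.
  intros [H0 H1]. pose proof PI_RGT_0.
  apply Rnot_lt_le. intros Hlt.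
  set (g := fun t => sin t - 2 / PI * t).
  assert (Hg' : forall c, derivable_pt_lim g c (cos c - 2 / PI)).
  { intros c. unfold g.
    assert (Hlin : derivable_pt_lim (fun t => 2 / PI * t) c (2 / PI * 1))
      by apply (derivable_pt_lim_scal id), derivable_pt_lim_id.
    rewrite Rmult_1_r in Hlin.
    exact (derivable_pt_lim_minus _ _ _ _ _ (derivable_pt_lim_sin c) Hlin). }
  assert (Hu0 : 0 < u).
  { destruct H0 as [|Hu]; [assumption|]. subst u. rewrite sin_0 in Hlt. lra. }
  assert (Hu1 : u < PI / 2).
  { destruct H1 as [|Hu]; [assumption|]. subst u. rewrite sin_PI2 in Hlt.
    replace (2 / PI * (PI / 2)) with 1 in Hlt by (field; lra). lra. }
  destruct (MVT_cor2 g (fun c => cos c - 2 / PI) 0 u Hu0 (fun c _ => Hg' c))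
    as [c1 [E1 [Hc1 Hc1']]].
  destruct (MVT_cor2 g (fun c => cos c - 2 / PI) u (PI / 2) Hu1 (fun c _ => Hg' c))
    as [c2 [E2 [Hc2 Hc2']]].
  unfold g in E1, E2. rewrite sin_0 in E1. rewrite sin_PI2 in E2.
  replace (2 / PI * (PI / 2)) with 1 in E2 by (field; lra).
  assert (cos c2 < cos c1) by (apply cos_decreasing_1; lra).
  assert (cos c1 - 2 / PI < 0) by (apply Rnot_le_lt; intros; nra).
  assert (0 < cos c2 - 2 / PI) by (apply Rnot_le_lt; intros; nra).
  lra.
Qed.

Lemma abs_sin_ge_jordan u : - (PI / 2) <= u <= PI / 2 -> 2 / PI * Rabs u <= Rabs (sin u).
Proof.
  intros Hu. pose proof PI_RGT_0.
  assert (H2PI : 0 < 2 / PI) by (apply Rdiv_lt_0_compat; lra).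
  destruct (Rle_lt_dec 0 u).
  - pose proof (sin_ge_jordan u ltac:(lra)).
    rewrite (Rabs_right u), (Rabs_right (sin u)) by nra. assumption.
  - pose proof (sin_ge_jordan (- u) ltac:(lra)). rewrite sin_neg in *.
    rewrite (Rabs_left u), (Rabs_left1 (sin u)) by nra. assumption.
Qed.

Lemma unit_dist_sin a b : unit_dist a b = 2 * Rabs (sin ((a - b) / 2)).
Proof.
  unfold unit_dist, cmod.
  replace ((cos a - cos b) ^ 2 + (sin a - sin b) ^ 2) with (Rsqr (2 * sin ((a - b) / 2))).
  - rewrite sqrt_Rsqr_abs, Rabs_mult, Rabs_right by lra. reflexivity.
  - pose proof (cos_2a_sin ((a - b) / 2)) as Hcos.
    replace (2 * ((a - b) / 2)) with (a - b) in Hcos by field. rewrite cos_minus in Hcos.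
    pose proof (sin2_cos2 a). pose proof (sin2_cos2 b). unfold Rsqr in *. nra.
Qed.

Lemma unit_dist_ge a b : - (PI / 2) <= a <= PI / 2 -> - (PI / 2) <= b <= PI / 2 ->
  2 / PI * Rabs (a - b) <= unit_dist a b.
Proof.
  intros Ha Hb. rewrite unit_dist_sin.
  pose proof (abs_sin_ge_jordan ((a - b) / 2) ltac:(lra)).
  unfold Rdiv in *. rewrite Rabs_mult, (Rabs_right (/ 2)) in * by lra. lra.
Qed.

Lemma norm_inf_ge p v j : (j < p)%nat -> Rabs (v j) <= norm_inf p v.
Proof.
  induction p as [|p IH]; intros Hj; [lia|]. simpl.
  destruct (Nat.eq_dec j p) as [->|]; [apply Rmax_r|].
  eapply Rle_trans; [apply IH; lia | apply Rmax_l].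
Qed.

Lemma eta_entry_unit q th thh j :
  eta_entry q (fun j => cos (th j)) (fun j => sin (th j))
    (fun l => cos (thh l)) (fun l => sin (thh l)) j
  = rprod q (fun l => unit_dist (th j) (thh l)).
Proof.
  unfold eta_entry. induction q as [|q IH]; simpl; [reflexivity|]. rewrite IH. reflexivity.
Qed.

Lemma eta_unit_norm_angle_prod p q th thh eps :
  (forall j, (j < p)%nat -> - (PI / 2) <= th j <= PI / 2) ->
  (forall l, (l < q)%nat -> - (PI / 2) <= thh l <= PI / 2) ->
  eta_unit_norm p q th thh < (2 / PI) ^ q * eps ->
  forall j, (j < p)%nat -> rprod q (fun l => Rabs (th j - thh l)) < eps.
Proof.
  intros Hth Hthh Heta j Hj. pose proof PI_RGT_0.
  assert (H2PI : 0 < (2 / PI) ^ q) by (apply pow_lt, Rdiv_lt_0_compat; lra).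
  pose proof (norm_inf_ge p (eta_entry q (fun j => cos (th j)) (fun j => sin (th j))
    (fun l => cos (thh l)) (fun l => sin (thh l))) j Hj) as Hentry.
  fold (eta_unit_norm p q th thh) in Hentry. rewrite eta_entry_unit in Hentry.
  assert (Hchord : (2 / PI) ^ q * rprod q (fun l => Rabs (th j - thh l))
                   <= rprod q (fun l => unit_dist (th j) (thh l))).
  { rewrite <- rprod_scal. apply rprod_le. intros l Hl. split.
    - apply Rmult_le_pos; [left; apply Rdiv_lt_0_compat; lra | apply Rabs_pos].
    - apply unit_dist_ge; auto. }
  pose proof (Rle_abs (rprod q (fun l => unit_dist (th j) (thh l)))).
  apply (Rmult_lt_reg_l ((2 / PI) ^ q)); [exact H2PI | lra].
Qed.

Lemma abs_INR_sub_ge_1 i j : i <> j -> 1 <= Rabs (INR i - INR j).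
Proof.
  intros Hij. destruct (Nat.lt_total i j) as [Hlt|[Heq|Hlt]]; [|lia|].
  - pose proof (le_INR (S i) j Hlt). rewrite S_INR in *. rewrite Rabs_left; lra.
  - pose proof (le_INR (S j) i Hlt). rewrite S_INR in *. rewrite Rabs_right; lra.
Qed.

Lemma Rmult_neg_of_ratios_pos a b c d : 0 < a / c -> 0 < b / d -> c * d < 0 -> a * b < 0.
Proof.
  intros Hac Hbd Hcd. assert (c <> 0) by (intros ->; lra). assert (d <> 0) by (intros ->; lra).
  replace (a * b) with (a / c * (b / d) * (c * d)) by (field; auto).
  pose proof (Rmult_lt_0_compat _ _ Hac Hbd). nra.
Qed.

Lemma Rpower_inv_le_pow A t k : 0 < A -> (0 < k)%nat -> Rpower A (/ INR k) <= t -> A <= t ^ k.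
Proof.
  intros HA Hk Ht.
  assert (Hroot : Rpower A (/ INR k) ^ k = A).
  { rewrite <- Rpower_pow by (unfold Rpower; apply exp_pos).
    rewrite Rpower_mult, Rinv_l by (apply not_0_INR; lia). apply Rpower_1, HA. }
  rewrite <- Hroot. apply pow_incr. split; [left; unfold Rpower; apply exp_pos | exact Ht].
Qed.

Lemma theta_min_threshold k eps t : (2 <= k)%nat -> 0 < eps ->
  t >= Rpower (4 * eps / lambda k) (/ INR k) ->
  0 < t /\ eps * 2 ^ k <= INR (fact (k - 1)) * t ^ k.
Proof.
  intros Hk Heps Ht. destruct (lambda_pos_bound k Hk) as [Hlam Hlam_fact].
  assert (Hpos : 0 < t)
    by (pose proof (exp_pos (/ INR k * ln (4 * eps / lambda k))); unfold Rpower in Ht; lra).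
  split; [exact Hpos|].
  assert (Hpow : 4 * eps / lambda k <= t ^ k)
    by (apply Rpower_inv_le_pow; [apply Rdiv_lt_0_compat; lra | lia | lra]).
  replace (2 ^ k) with (4 * 2 ^ (k - 2))
    by (replace k with (2 + (k - 2))%nat at 2 by lia; rewrite pow_add; ring).
  assert (Heps_le : 4 * eps <= lambda k * t ^ k).
  { apply (Rmult_le_compat_l (lambda k)) in Hpow; [|lra].
    replace (lambda k * (4 * eps / lambda k)) with (4 * eps) in Hpow by (field; lra). lra. }
  pose proof (pow_lt 2 (k - 2) ltac:(lra)). pose proof (pow_lt t k Hpos).
  apply Rle_trans with (lambda k * 2 ^ (k - 2) * t ^ k); [nra|].
  apply Rmult_le_compat_r; lra.
Qed.

Section Recovery.

Variables (k : nat) (th thh : nat -> R) (eps tmin : R).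

Hypothesis two_le_k : (2 <= k)%nat.
Hypothesis th_increasing : forall j, (S j < k)%nat -> th j < th (S j).
Hypothesis th_sep : forall i j, (i < k)%nat -> (j < k)%nat -> i <> j -> tmin <= Rabs (th i - th j).
Hypothesis tmin_pos : 0 < tmin.
Hypothesis eps_pos : 0 < eps.
Hypothesis prod_lt_eps : forall j, (j < k)%nat -> rprod k (fun l => Rabs (th j - thh l)) < eps.
Hypothesis eps_small : eps * 2 ^ k <= INR (fact (k - 1)) * tmin ^ k.

Lemma th_distinct : distinct th k.
Proof.
  intros i j Hi Hj Hij E. pose proof (th_sep i j Hi Hj Hij).
  rewrite E, Rminus_diag, Rabs_R0 in *. lra.
Qed.

Lemma th_gap i n : (i + n < k)%nat -> INR n * tmin <= th (i + n)%nat - th i.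
Proof.
  induction n as [|n IH]; intros Hin.
  - rewrite Nat.add_0_r. simpl. lra.
  - specialize (IH ltac:(lia)).
    pose proof (th_increasing (i + n) ltac:(lia)).
    pose proof (th_sep (S (i + n)) (i + n) ltac:(lia) ltac:(lia) ltac:(lia)) as Hstep.
    rewrite Rabs_right in Hstep by lra. rewrite Nat.add_succ_r, S_INR. lra.
Qed.

Lemma th_sep_index i m : (i < k)%nat -> (m < k)%nat ->
  Rabs (INR i - INR m) * tmin <= Rabs (th i - th m).
Proof.
  assert (Hle : forall i m, (i <= m)%nat -> (m < k)%nat ->
            Rabs (INR i - INR m) * tmin <= Rabs (th i - th m)).
  { clear i m. intros i m Him Hm. pose proof (th_gap i (m - i) ltac:(lia)) as Hgap.
    replace (i + (m - i))%nat with m in Hgap by lia. rewrite minus_INR in Hgap by exact Him.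
    pose proof (le_INR i m Him).
    rewrite (Rabs_minus_sym (INR i)), (Rabs_minus_sym (th i)), !Rabs_right by nra. exact Hgap. }
  intros Hi Hm. destruct (Nat.le_gt_cases i m).
  - apply Hle; assumption.
  - rewrite (Rabs_minus_sym (INR i)), (Rabs_minus_sym (th i)). apply Hle; lia.
Qed.

Lemma lagrange_den_ge i : (i < k)%nat ->
  INR (fact i) * INR (fact (k - 1 - i)) * tmin ^ (k - 1) <= Rabs (lagrange_den th k i).
Proof.
  intros Hi. unfold lagrange_den. rewrite rprod_abs.
  apply Rle_trans with (rprod k (fun m => if Nat.eqb m i then 1 else tmin * Rabs (INR i - INR m))).
  - rewrite (rprod_punctured_dist (fun d => tmin * d)) by exact Hi.
    rewrite !rprod_scal, !rprod_fact.
    replace (tmin ^ (k - 1)) with (tmin ^ i * tmin ^ (k - 1 - i))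
      by (rewrite <- pow_add; f_equal; lia).
    right; ring.
  - apply rprod_le. intros m Hm. destruct (Nat.eqb_spec m i).
    + rewrite Rabs_R1. lra.
    + split; [apply Rmult_le_pos; [lra | apply Rabs_pos]|].
      rewrite Rmult_comm. apply th_sep_index; assumption.
Qed.

Lemma rsum_inv_lagrange_den_le xs : (forall i, (i < k)%nat -> tmin / 2 <= Rabs (th i - xs)) ->
  rsum k (fun i => / (Rabs (lagrange_den th k i) * Rabs (th i - xs)))
  <= 2 ^ k / (INR (fact (k - 1)) * tmin ^ k).
Proof.
  intros Hfar.
  apply Rle_trans with (rsum k (fun i => 2 / tmin ^ k * / (INR (fact i) * INR (fact (k - 1 - i))))).
  - apply rsum_le. intros i Hi.
    pose proof (lagrange_den_ge i Hi). pose proof (Hfar i Hi).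
    assert (0 < INR (fact i) * INR (fact (k - 1 - i)))
      by (apply Rmult_lt_0_compat; apply lt_0_INR, lt_O_fact).
    pose proof (pow_lt tmin (k - 1) tmin_pos).
    replace (2 / tmin ^ k * / (INR (fact i) * INR (fact (k - 1 - i))))
      with (/ (INR (fact i) * INR (fact (k - 1 - i)) * tmin ^ (k - 1) * (tmin / 2))).
    + apply Rinv_le_contravar; [apply Rmult_lt_0_compat; [apply Rmult_lt_0_compat|]; lra|].
      apply Rmult_le_compat; try lra. left; apply Rmult_lt_0_compat; assumption.
    + replace (tmin ^ k) with (tmin * tmin ^ (k - 1)) by (rewrite tech_pow_Rmult; f_equal; lia).
      field. repeat split; try apply INR_fact_neq_0; lra.
  - rewrite rsum_scal.
    replace k with (S (k - 1)) at 2 by lia. rewrite rsum_inv_fact_mul.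
    replace (2 ^ k) with (2 * 2 ^ (k - 1)) by (rewrite tech_pow_Rmult; f_equal; lia).
    right. field. split; [apply pow_nonzero; lra | apply INR_fact_neq_0].
Qed.

Lemma nodal_ratio_pos xs : (forall i, (i < k)%nat -> tmin / 2 <= Rabs (th i - xs)) ->
  0 < nodal thh k xs / nodal th k xs.
Proof.
  intros Hfar.
  assert (Hxs : forall i, (i < k)%nat -> xs <> th i).
  { intros i Hi E. pose proof (Hfar i Hi). rewrite E, Rminus_diag, Rabs_R0 in *. lra. }
  rewrite nodal_ratio_partial_fractions by (exact th_distinct || exact Hxs).
  set (T := rsum k _).
  enough (Rabs T < 1) by (pose proof (Rle_abs T); lra).
  apply Rle_lt_trans with (1 := rsum_abs k _).
  apply Rlt_le_trans
    with (rsum k (fun i => eps * / (Rabs (lagrange_den th k i) * Rabs (th i - xs)))).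
  - apply rsum_lt; [lia|]. intros i Hi.
    pose proof (lagrange_den_ge i Hi). pose proof (Hfar i Hi).
    assert (0 < INR (fact i) * INR (fact (k - 1 - i)) * tmin ^ (k - 1))
      by (apply Rmult_lt_0_compat;
          [apply Rmult_lt_0_compat; apply lt_0_INR, lt_O_fact | apply pow_lt; lra]).
    unfold Rdiv. rewrite Rabs_mult, Rabs_inv, Rabs_mult.
    apply Rmult_lt_compat_r; [apply Rinv_0_lt_compat, Rmult_lt_0_compat; lra|].
    unfold nodal. rewrite rprod_abs. apply prod_lt_eps, Hi.
  - rewrite rsum_scal.
    pose proof (rsum_inv_lagrange_den_le xs Hfar).
    assert (HD : 0 < INR (fact (k - 1)) * tmin ^ k)
      by (apply Rmult_lt_0_compat; [apply lt_0_INR, lt_O_fact | apply pow_lt; lra]).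
    apply Rle_trans with (eps * (2 ^ k / (INR (fact (k - 1)) * tmin ^ k))).
    + apply Rmult_le_compat_l; lra.
    + unfold Rdiv. rewrite <- Rmult_assoc. apply (Rmult_le_reg_r _ _ _ HD).
      rewrite Rmult_assoc, Rinv_l, Rmult_1_l, Rmult_1_r by lra. exact eps_small.
Qed.

Lemma exists_close j : (j < k)%nat -> exists l, (l < k)%nat /\ Rabs (thh l - th j) < tmin / 2.
Proof.
  intros Hj. set (xm := th j - tmin / 2). set (xp := th j + tmin / 2).
  assert (Hfar : forall xs, Rabs (xs - th j) = tmin / 2 ->
            forall i, (i < k)%nat -> tmin / 2 <= Rabs (th i - xs)).
  { intros xs Hxs i Hi. destruct (Nat.eq_dec i j) as [->|Hij].
    - rewrite Rabs_minus_sym. lra.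
    - pose proof (th_sep i j Hi Hj Hij).
      pose proof (Rabs_triang (th i - xs) (xs - th j)).
      replace (th i - xs + (xs - th j)) with (th i - th j) in * by ring. lra. }
  assert (Hm : 0 < nodal thh k xm / nodal th k xm).
  { apply nodal_ratio_pos, Hfar. unfold xm.
    replace (th j - tmin / 2 - th j) with (- (tmin / 2)) by ring.
    rewrite Rabs_Ropp, Rabs_right; lra. }
  assert (Hp : 0 < nodal thh k xp / nodal th k xp).
  { apply nodal_ratio_pos, Hfar. unfold xp.
    replace (th j + tmin / 2 - th j) with (tmin / 2) by ring. rewrite Rabs_right; lra. }
  assert (Hth_sign : nodal th k xm * nodal th k xp < 0).
  { unfold nodal. rewrite <- rprod_mult. apply (rprod_neg_of_neg _ _ j Hj).
    - unfold xm, xp. nra.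
    - intros i Hi Hij. pose proof (th_sep i j Hi Hj Hij) as Hsep. unfold xm, xp.
      replace ((th j - tmin / 2 - th i) * (th j + tmin / 2 - th i))
        with (Rsqr (th i - th j) - Rsqr (tmin / 2)) by (unfold Rsqr; field).
      rewrite Rsqr_abs. apply Rlt_0_minus, Rsqr_incrst_1; lra. }
  pose proof (Rmult_neg_of_ratios_pos _ _ _ _ Hm Hp Hth_sign) as Hthh_sign.
  unfold nodal in Hthh_sign. rewrite <- rprod_mult in Hthh_sign.
  destruct (rprod_neg_exists _ _ Hthh_sign) as [l [Hl Hneg]].
  exists l. split; [exact Hl|]. unfold xm, xp in Hneg.
  apply Rabs_def1; nra.
Qed.

Lemma rprod_unmatched_ge (sigma : nat -> nat) j :
  (forall i, (i < k)%nat -> Rabs (thh (sigma i) - th i) < tmin / 2) -> (j < k)%nat ->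
  (tmin / 2) ^ (k - 1) * INR (fact (k - 2))
  <= rprod k (fun i => if Nat.eqb i j then 1 else Rabs (th j - thh (sigma i))).
Proof.
  intros Hclose Hj. assert (Hhalf : 0 < tmin / 2) by lra.
  apply Rle_trans with
    (rprod k (fun i => if Nat.eqb i j then 1 else tmin / 2 * (2 * Rabs (INR j - INR i) - 1))).
  - rewrite (rprod_punctured_dist (fun d => tmin / 2 * (2 * d - 1))) by exact Hj.
    rewrite !rprod_scal. fold (odd_fact j) (odd_fact (k - 1 - j)).
    replace ((tmin / 2) ^ (k - 1)) with ((tmin / 2) ^ j * (tmin / 2) ^ (k - 1 - j))
      by (rewrite <- pow_add; f_equal; lia).
    pose proof (odd_fact_mul_ge (k - 2) j (k - 1 - j) ltac:(lia)).
    pose proof (pow_lt _ j Hhalf). pose proof (pow_lt _ (k - 1 - j) Hhalf).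
    replace ((tmin / 2) ^ j * odd_fact j * ((tmin / 2) ^ (k - 1 - j) * odd_fact (k - 1 - j)))
      with ((tmin / 2) ^ j * (tmin / 2) ^ (k - 1 - j) * (odd_fact j * odd_fact (k - 1 - j)))
      by ring.
    apply Rmult_le_compat_l; [nra | assumption].
  - apply rprod_le. intros i Hi. destruct (Nat.eqb_spec i j) as [|Hij]; [lra|].
    pose proof (abs_INR_sub_ge_1 j i (not_eq_sym Hij)).
    pose proof (th_sep_index j i Hj Hi). pose proof (Hclose i Hi).
    pose proof (Rabs_triang (th j - thh (sigma i)) (thh (sigma i) - th i)).
    replace (th j - thh (sigma i) + (thh (sigma i) - th i)) with (th j - th i) in * by ring.
    split; nra.
Qed.

Lemma matched_error (sigma : nat -> nat) j :
  (forall i, (i < k)%nat -> (sigma i < k)%nat) ->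
  (forall i i', (i < k)%nat -> (i' < k)%nat -> sigma i = sigma i' -> i = i') ->
  (forall i, (i < k)%nat -> Rabs (thh (sigma i) - th i) < tmin / 2) ->
  (j < k)%nat ->
  Rabs (thh (sigma j) - th j) <= 2 ^ (k - 1) * eps / (INR (fact (k - 2)) * tmin ^ (k - 1)).
Proof.
  intros Hrange Hinj Hclose Hj.
  pose proof (prod_lt_eps j Hj) as Hprod.
  rewrite <- (rprod_perm k sigma (fun l => Rabs (th j - thh l)) Hrange Hinj) in Hprod.
  rewrite (rprod_pick j k) in Hprod by exact Hj.
  set (d := Rabs (thh (sigma j) - th j)).
  assert (Hd : d * ((tmin / 2) ^ (k - 1) * INR (fact (k - 2))) < eps).
  { apply Rle_lt_trans with (2 := Hprod). unfold d. rewrite Rabs_minus_sym.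
    apply Rmult_le_compat_l; [apply Rabs_pos | exact (rprod_unmatched_ge sigma j Hclose Hj)]. }
  assert (Hfact : 0 < INR (fact (k - 2))) by apply lt_0_INR, lt_O_fact.
  pose proof (pow_lt tmin (k - 1) tmin_pos). pose proof (pow_lt 2 (k - 1) ltac:(lra)).
  unfold Rdiv in Hd. rewrite Rpow_mult_distr, pow_inv in Hd.
  apply Rmult_le_reg_r with (INR (fact (k - 2)) * tmin ^ (k - 1) / 2 ^ (k - 1)).
  - apply Rdiv_lt_0_compat; [apply Rmult_lt_0_compat|]; assumption.
  - replace (2 ^ (k - 1) * eps / (INR (fact (k - 2)) * tmin ^ (k - 1))
               * (INR (fact (k - 2)) * tmin ^ (k - 1) / 2 ^ (k - 1))) with eps by (field; lra).
    left. replace (d * (INR (fact (k - 2)) * tmin ^ (k - 1) / 2 ^ (k - 1)))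
      with (d * (tmin ^ (k - 1) * / 2 ^ (k - 1) * INR (fact (k - 2)))) by (field; lra).
    exact Hd.
Qed.

Lemma recovery :
  exists sigma : nat -> nat,
    (forall j, (j < k)%nat -> (sigma j < k)%nat) /\
    (forall i j, (i < k)%nat -> (j < k)%nat -> sigma i = sigma j -> i = j) /\
    (forall j, (j < k)%nat ->
       Rabs (thh (sigma j) - th j) < tmin / 2 /\
       Rabs (thh (sigma j) - th j)
         <= 2 ^ (k - 1) * eps / (INR (fact (k - 2)) * tmin ^ (k - 1))).
Proof.
  destruct (choice (fun j l => (j < k)%nat -> (l < k)%nat /\ Rabs (thh l - th j) < tmin / 2))
    as [sigma Hsigma].
  { intros j. destruct (lt_dec j k) as [Hj|Hj].
    - destruct (exists_close j Hj) as [l Hl]. exists l. intros _. exact Hl.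
    - exists 0%nat. intros Hj'. contradiction. }
  assert (Hinj : forall i j, (i < k)%nat -> (j < k)%nat -> sigma i = sigma j -> i = j).
  { intros i j Hi Hj E. destruct (Nat.eq_dec i j) as [|Hij]; [assumption | exfalso].
    destruct (Hsigma i Hi) as [_ Hci]. destruct (Hsigma j Hj) as [_ Hcj]. rewrite E in Hci.
    pose proof (th_sep i j Hi Hj Hij).
    pose proof (Rabs_triang (th i - thh (sigma j)) (thh (sigma j) - th j)).
    replace (th i - thh (sigma j) + (thh (sigma j) - th j)) with (th i - th j) in * by ring.
    rewrite Rabs_minus_sym in Hci. lra. }
  exists sigma. split; [|split]; [intros j Hj; apply Hsigma, Hj | exact Hinj |].
  intros j Hj. split; [apply Hsigma, Hj|].
  apply matched_error;
    [intros i Hi; apply Hsigma, Hi | exact Hinj | intros i Hi; apply Hsigma, Hi | exact Hj].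
Qed.

End Recovery.

Theorem corollary3p2 (k : nat) (th thh : nat -> R) (eps tmin : R) :
  (2 <= k)%nat ->
  (forall j, (j < k)%nat -> - (PI / 2) <= th j <= PI / 2) ->
  (forall j, (S j < k)%nat -> th j < th (S j)) ->
  (forall j, (j < k)%nat -> - (PI / 2) <= thh j <= PI / 2) ->
  0 < eps ->
  eta_unit_norm k k th thh < (2 / PI) ^ k * eps ->
  is_theta_min k th tmin ->
  tmin >= Rpower (4 * eps / lambda k) (/ INR k) ->
  exists sigma : nat -> nat,
    (forall j, (j < k)%nat -> (sigma j < k)%nat) /\
    (forall i j, (i < k)%nat -> (j < k)%nat -> sigma i = sigma j -> i = j) /\
    (forall j, (j < k)%nat ->
       Rabs (thh (sigma j) - th j) < tmin / 2 /\
       Rabs (thh (sigma j) - th j)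
         <= 2 ^ (k - 1) * eps / (INR (fact (k - 2)) * tmin ^ (k - 1))).
Proof.
  intros Hk Hth Hinc Hthh Heps Heta [Hsep _] Htmin.
  destruct (theta_min_threshold k eps tmin Hk Heps Htmin) as [Htmin_pos Heps_small].
  apply recovery; try assumption.
  exact (eta_unit_norm_angle_prod k k th thh eps Hth Hthh Heta).
Qed.
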